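(* Let $\mathbf{x}\in(\Sigma^* )^\circ$ be arbitrary and let $\mathbf{s}\in\mathbb{R}^U$. Define the block-diagonal symmetric matrix \[ \mathbf{S}(\mathbf{x},\mathbf{s}) := \Lambda(\mathbf{x})^{-1}\,\Lambda\!\left(H(\mathbf{x})^{-1}\mathbf{s}\right)\Lambda(\mathbf{x})^{-1}. \] Then $\Lambda^*(\mathbf{S}(\mathbf{x},\mathbf{s}))=\mathbf{s}$. Moreover, for $\mathbf{s}\in\Sigma$, $\mathbf{x}$ is a dual certificate of $\mathbf{s}$ (i.e. $H(\mathbf{x})^{-1}\mathbf{s}\in\Sigma^*$) if and only if $\mathbf{S}(\mathbf{x},\mathbf{s})\succeq \mathbf{0}$.
   Context: Fix nonzero real polynomials $g_1,\dots,g_m$ in $n$ variables and nonnegative integers $d_1,\dots,d_m$. Let $\mathcal V$ be the real vector space of polynomials of the form $\sum_{i=1}^m g_i r_i$ with each $r_i$ a polynomial of degree at most $2d_i$, and let $\Sigma\subseteq\mathcal V$ be the cone of weighted sums of squares $\sum_{i=1}^m g_i\sigma_i$, where each $\sigma_i$ is a sum of squares of polynomials of degree at most $d_i$. Assume $\Sigma$ is a proper cone (closed, convex, pointed, full-dimensional in $\mathcal V$). Fix an ordered basis $\mathbf q=(q_1,\dots,q_U)$ of $\mathcal V$ and identify $\mathcal V$ and its dual with $\mathbb R^U$ (coefficient vectors), with the standard inner product and Euclidean norm $\|\cdot\|$; $\Sigma^*=\{\mathbf x:\mathbf x^T\mathbf s\ge 0\ \forall \mathbf s\in\Sigma\}$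 is the dual cone and $K^\circ$ denotes the interior of $K$. For each $i$ fix an ordered basis $\mathbf p_i=(p_{i,1},\dots,p_{i,L_i})$ of the polynomials of degree at most $d_i$, and let $\Lambda_i:\mathbb R^U\to\mathbb S^{L_i}$ be the unique linear map with $\sum_{u=1}^U q_u\Lambda_i(\mathbf e_u)=g_i\mathbf p_i\mathbf p_i^T$ (as matrices of polynomials). Let $\Lambda=\Lambda_1\oplus\cdots\oplus\Lambda_m$, mapping $\mathbb R^U$ into block-diagonal symmetric matrices, and $\Lambda^*$ its adjoint with respect to the trace inner product. Then $\Sigma^*=\{\mathbf x:\Lambda(\mathbf x)\succeq 0\}$ and $(\Sigma^* )^\circ=\{\mathbf x:\Lambda(\mathbf x)\succ0\}$. Let $f(\mathbf x)=-\ln\det\Lambda(\mathbf x)$ on $(\Sigma^* )^\circ$; its Hessian $H(\mathbf x)$ is the positive definite operator $H(\mathbf x)\mathbf w=\Lambda^*(\Lambda(\mathbf x)^{-1}\Lambda(\mathbf w)\Lambda(\mathbf x)^{-1})$. A vector $\mathbf x\in(\Sigma^* )^\circ$ is called a dual certificate of $\mathbf s\in\Sigma$ if $H(\mathbf x)^{-1}\mathbf s\in\Sigma^*$. *)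

From HB Require Import structures.
From mathcomp Require Import all_boot all_order all_algebra.
From mathcomp Require Import mpoly.
Set Implicit Arguments. Unset Strict Implicit. Unset Printing Implicit Defensive.
Import Order.TTheory GRing.Theory Num.Theory.
Local Open Scope ring_scope.

Section Defs.
Variable R : realFieldType.

(* total degree of p is at most k (the zero polynomial has every degree bound) *)
Definition deg_le (n : nat) (p : {mpoly R[n]}) (k : nat) : Prop := (msize p <= k.+1)%N.

Definition inV (n m : nat) (g : 'I_m -> {mpoly R[n]}) (d : 'I_m -> nat)
  (f : {mpoly R[n]}) : Prop :=
  exists r : 'I_m -> {mpoly R[n]},
    (forall i, deg_le (r i) (2 * d i)) /\ f = \sum_(i < m) g i * r i.

Definition lincomb (n N : nat) (q : 'I_N -> {mpoly R[n]}) (c : 'cV[R]_N) : {mpoly R[n]} :=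
  \sum_(u < N) c u 0 *: q u.

Definition is_basis_of (n N : nat) (P : {mpoly R[n]} -> Prop)
  (q : 'I_N -> {mpoly R[n]}) : Prop :=
  [/\ forall u, P (q u),
      forall c : 'cV[R]_N, lincomb q c = 0 -> c = 0
    & forall f, P f -> exists c : 'cV[R]_N, f = lincomb q c].

Definition is_sos (n : nat) (k : nat) (sigma : {mpoly R[n]}) : Prop :=
  exists s : seq {mpoly R[n]},
    (forall r, r \in s -> deg_le r k) /\ sigma = \sum_(r <- s) r ^+ 2.

Definition is_wsos (n m : nat) (g : 'I_m -> {mpoly R[n]}) (d : 'I_m -> nat)
  (f : {mpoly R[n]}) : Prop :=
  exists sigma : 'I_m -> {mpoly R[n]},
    (forall i, is_sos (d i) (sigma i)) /\ f = \sum_(i < m) g i * sigma i.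

(* Sigma, as a set of coefficient vectors w.r.t. the basis q *)
Definition Sigma (n m U : nat) (g : 'I_m -> {mpoly R[n]}) (d : 'I_m -> nat)
  (q : 'I_U -> {mpoly R[n]}) (s : 'cV[R]_U) : Prop :=
  is_wsos g d (lincomb q s).

Definition dotv (U : nat) (x y : 'cV[R]_U) : R := \sum_(u < U) x u 0 * y u 0.
Definition sqnorm (U : nat) (x : 'cV[R]_U) : R := dotv x x.

Definition dual_cone (U : nat) (K : 'cV[R]_U -> Prop) (x : 'cV[R]_U) : Prop :=
  forall s, K s -> 0 <= dotv x s.

Definition interior_of (U : nat) (K : 'cV[R]_U -> Prop) (x : 'cV[R]_U) : Prop :=
  exists2 e : R, 0 < e & forall y, sqnorm (y - x) < e ^+ 2 -> K y.

Definition closed_set (U : nat) (K : 'cV[R]_U -> Prop) : Prop :=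
  forall x, ~ K x -> interior_of (fun y => ~ K y) x.

Definition convex_set (U : nat) (K : 'cV[R]_U -> Prop) : Prop :=
  forall x y (t : R), K x -> K y -> 0 <= t -> t <= 1 -> K (t *: x + (1 - t) *: y).

Definition is_cone (U : nat) (K : 'cV[R]_U -> Prop) : Prop :=
  forall x (t : R), K x -> 0 <= t -> K (t *: x).

Definition pointed (U : nat) (K : 'cV[R]_U -> Prop) : Prop :=
  forall x, K x -> K (- x) -> x = 0.

Definition full_dim (U : nat) (K : 'cV[R]_U -> Prop) : Prop :=
  exists x, interior_of K x.

Definition proper_cone (U : nat) (K : 'cV[R]_U -> Prop) : Prop :=
  [/\ is_cone K, closed_set K, convex_set K, pointed K & full_dim K].

Definition psd (N : nat) (A : 'M[R]_N) : Prop :=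
  A^T = A /\ forall v : 'cV[R]_N, 0 <= (v^T *m A *m v) 0 0.
Definition pd (N : nat) (A : 'M[R]_N) : Prop :=
  A^T = A /\ forall v : 'cV[R]_N, v != 0 -> 0 < (v^T *m A *m v) 0 0.

Definition trdot (N : nat) (A B : 'M[R]_N) : R := \tr (A^T *m B).

Definition evec (U : nat) (u : 'I_U) : 'cV[R]_U := \col_(v < U) (v == u)%:R.

Definition Lam_i (m U : nat) (L : 'I_m -> nat) (A : forall i, 'I_U -> 'M[R]_(L i))
  (i : 'I_m) (x : 'cV[R]_U) : 'M[R]_(L i) :=
  \sum_(u < U) x u 0 *: A i u.

Definition Lam (m U : nat) (L : 'I_m -> nat) (A : forall i, 'I_U -> 'M[R]_(L i))
  (x : 'cV[R]_U) : 'M[R]_(\sum_i L i) :=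
  mxdiag (fun i => Lam_i A i x).

Definition Lam_adj (m U : nat) (L : 'I_m -> nat) (A : forall i, 'I_U -> 'M[R]_(L i))
  (S : 'M[R]_(\sum_i L i)) : 'cV[R]_U :=
  \col_(u < U) trdot (Lam A (evec u)) S.

Definition Hess_op (m U : nat) (L : 'I_m -> nat) (A : forall i, 'I_U -> 'M[R]_(L i))
  (x w : 'cV[R]_U) : 'cV[R]_U :=
  Lam_adj A (invmx (Lam A x) *m Lam A w *m invmx (Lam A x)).

Definition Hess (m U : nat) (L : 'I_m -> nat) (A : forall i, 'I_U -> 'M[R]_(L i))
  (x : 'cV[R]_U) : 'M[R]_U :=
  \matrix_(u < U, v < U) Hess_op A x (evec v) u 0.

Definition Hinv_app (m U : nat) (L : 'I_m -> nat) (A : forall i, 'I_U -> 'M[R]_(L i))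
  (x s : 'cV[R]_U) : 'cV[R]_U :=
  invmx (Hess A x) *m s.

Definition Smat (m U : nat) (L : 'I_m -> nat) (A : forall i, 'I_U -> 'M[R]_(L i))
  (x s : 'cV[R]_U) : 'M[R]_(\sum_i L i) :=
  invmx (Lam A x) *m Lam A (Hinv_app A x s) *m invmx (Lam A x).

Definition dual_certificate (n m U : nat) (g : 'I_m -> {mpoly R[n]}) (d : 'I_m -> nat)
  (q : 'I_U -> {mpoly R[n]}) (L : 'I_m -> nat) (A : forall i, 'I_U -> 'M[R]_(L i))
  (x s : 'cV[R]_U) : Prop :=
  dual_cone (Sigma g d q) (Hinv_app A x s).

End Defs.

(* Sigma is the cone of sums of weighted squares g_i (c . p_i)^2, and <w, .> evaluates on
   their coordinate vectors to the quadratic forms c^T Lambda_i(w) c; hence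
   Sigma^* = {w | Lambda(w) >= 0}.
   Pointedness of Sigma makes Lambda(x) positive definite at interior points x of Sigma^*, and
   full-dimensionality makes Lambda injective.  So w^T H(x) w = tr(Lambda(w) P Lambda(w) P), with
   P = Lambda(x)^-1 positive definite, vanishes only at w = 0: H(x) is invertible and
   Lambda^*(S) = H(x) H(x)^-1 s = s.  Finally S = P Lambda(H(x)^-1 s) P is congruent to
   Lambda(H(x)^-1 s) through the invertible symmetric P.  Over an ordered field without square
   roots, positivity of the trace form comes from a decomposition P = sum_k l_k v_k v_k^T with
   l_k >= 0, obtained by symmetric Gaussian elimination. *)

From HB Require Import structures.
From mathcomp Require Import all_boot all_order all_algebra.
From mathcomp Require Import mpoly.
From mathcomp Require Import ring lra.
Import Order.TTheory GRing.Theory Num.Theory.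
Local Open Scope ring_scope.
Set Implicit Arguments. Unset Strict Implicit. Unset Printing Implicit Defensive.

Section QuadraticForms.
Variables (R : comPzRingType) (N : nat).
Implicit Types (M : 'M[R]_N) (u v w : 'cV[R]_N).

Definition mxform M u v : R := (u^T *m M *m v) 0 0.

Lemma mxformDl M u1 u2 v : mxform M (u1 + u2) v = mxform M u1 v + mxform M u2 v.
Proof. by rewrite /mxform linearD /= !mulmxDl mxE. Qed.

Lemma mxformZl M a u v : mxform M (a *: u) v = a * mxform M u v.
Proof. by rewrite /mxform linearZ /= -!scalemxAl mxE. Qed.

Lemma mxformDr M u v1 v2 : mxform M u (v1 + v2) = mxform M u v1 + mxform M u v2.
Proof. by rewrite /mxform !mulmxDr mxE. Qed.

Lemma mxformZr M a u v : mxform M u (a *: v) = a * mxform M u v.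
Proof. by rewrite /mxform -!scalemxAr mxE. Qed.

Lemma mxform0l M v : mxform M 0 v = 0.
Proof. by rewrite -(scale0r 0) mxformZl mul0r. Qed.

Lemma mxform_trmx M u v : mxform M^T v u = mxform M u v.
Proof.
have -> : mxform M u v = ((u^T *m M *m v)^T) 0 0 by rewrite mxE.
by rewrite !trmx_mul trmxK mulmxA.
Qed.

Lemma mxformD M1 M2 u v : mxform (M1 + M2) u v = mxform M1 u v + mxform M2 u v.
Proof. by rewrite /mxform mulmxDr mulmxDl mxE. Qed.

Lemma mxformZ a M u v : mxform (a *: M) u v = a * mxform M u v.
Proof. by rewrite /mxform -scalemxAr -scalemxAl mxE. Qed.

Lemma mxform0 u v : mxform 0 u v = 0.
Proof. by rewrite -(scale0r 0) mxformZ mul0r. Qed.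

Lemma mxformB M1 M2 u v : mxform (M1 - M2) u v = mxform M1 u v - mxform M2 u v.
Proof. by rewrite mxformD -scaleN1r mxformZ mulN1r. Qed.

Lemma mxform_sum (I : Type) (r : seq I) (P : pred I) (F : I -> 'M[R]_N) u v :
  mxform (\sum_(i <- r | P i) F i) u v = \sum_(i <- r | P i) mxform (F i) u v.
Proof.
by apply: (big_morph (fun M => mxform M u v)) => [M1 M2|]; rewrite ?mxformD ?mxform0.
Qed.

Lemma mxform_delta M a b : mxform M (delta_mx a 0) (delta_mx b 0) = M a b.
Proof. by rewrite /mxform trmx_delta -rowE -colE !mxE. Qed.

Lemma mxform_outer (a b : 'cV[R]_N) u v :
  mxform (a *m b^T) u v = (u^T *m a) 0 0 * (b^T *m v) 0 0.
Proof. by rewrite /mxform mulmxA -(mulmxA _ b^T) mxE big_ord1. Qed.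

Lemma mxform_line M u w t :
  mxform M (u + t *: w) (u + t *: w) =
  mxform M u u + t * mxform M u w + t * mxform M w u + t ^+ 2 * mxform M w w.
Proof. rewrite !mxformDl !mxformDr !mxformZl !mxformZr; ring. Qed.

Lemma mxform_sum_entries M u v :
  mxform M u v = \sum_a \sum_b u a 0 * M a b * v b 0.
Proof.
rewrite /mxform mxE; under eq_bigr do rewrite mxE big_distrl /=.
rewrite exchange_big /=; apply: eq_bigr => a _; apply: eq_bigr => b _.
by rewrite !mxE.
Qed.

End QuadraticForms.

Lemma scale_mxdiag (R : pzRingType) m (L : 'I_m -> nat) a (B : forall i, 'M[R]_(L i)) :
  a *: mxdiag B = mxdiag (fun i => a *: B i).
Proof.
rewrite -mul_scalar_mx -mxdiagZ {2}/mxdiag mul_mxdiag_mxblock; apply/eq_mxblock => i j.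
by case: eqVneq => [->|]; rewrite ?mulmx0 // !conform_mx_id mul_scalar_mx.
Qed.

Lemma mxform_mxdiag (R : comPzRingType) m (L : 'I_m -> nat) (B : forall i, 'M[R]_(L i)) u v :
  mxform (mxdiag B) u v = \sum_i mxform (B i) (submxcol u i) (submxcol v i).
Proof.
rewrite -[in LHS](submxcolK u) -[in LHS](submxcolK v).
rewrite /mxform tr_mxcol -mulmxA mul_mxdiag_mxcol mul_mxrow_mxcol summxE.
by apply: eq_bigr => i _; rewrite mulmxA.
Qed.

Section PositiveSemidefinite.
Variables (R : realFieldType) (N : nat).
Implicit Types (M P B : 'M[R]_N) (v : 'cV[R]_N).

Lemma psd_row_eq0 P j k : psd P -> P j j = 0 -> P j k = 0.
Proof.
move=> [sP Ppos] Pjj; apply/eqP; apply: contraT => Pjk.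
have Pkj : P k j = P j k by rewrite -{1}sP mxE.
pose t := - (P k k + 1) / (2 * P j k).
have := Ppos (delta_mx k 0 + t *: delta_mx j 0).
rewrite -/(mxform _ _ _) mxform_line !mxform_delta Pjj Pkj.
have -> : P k k + t * P j k + t * P j k + t ^+ 2 * 0 = -1 by rewrite /t; field.
by apply: contraTT => _; rewrite -ltNge ltrN10.
Qed.

Lemma psd_eq0 P : psd P -> (forall j, P j j = 0) -> P = 0.
Proof. by move=> Ppsd P0; apply/matrixP => j k; rewrite mxE psd_row_eq0. Qed.

Lemma psd_schur P j : psd P -> 0 < P j j ->
  psd (P - (P j j)^-1 *: (col j P *m (col j P)^T)).
Proof.
move=> [sP Ppos] Pjj_gt0; split.
  by rewrite linearB /= linearZ /= trmx_mul trmxK sP.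
move=> v; set e : 'cV[R]_N := delta_mx j 0.
set s := mxform P e v.
have Pve : mxform P v e = s by rewrite -mxform_trmx sP.
have Pje : mxform P e e = P j j by rewrite mxform_delta.
have := Ppos (v + (- (s / P j j)) *: e).
rewrite -/(mxform _ _ _) -/(mxform _ v v) mxform_line Pve Pje mxformB mxformZ mxform_outer.
have -> : (v^T *m col j P) 0 0 = s by rewrite colE mulmxA -/(mxform P v e) Pve.
have -> : ((col j P)^T *m v) 0 0 = s by rewrite colE trmx_mul sP -/(mxform P e v).
have Pjj0 : P j j != 0 by rewrite gt_eqF.
move: (P j j) Pjj0 => D D0.
by rewrite -/s; congr (_ <= _); field.
Qed.

Lemma psd_schur_diag P j l :
  (P - (P j j)^-1 *: (col j P *m (col j P)^T)) l l = P l l - (P j j)^-1 * P l j ^+ 2.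
Proof. by rewrite !mxE big_ord1 !mxE expr2. Qed.

Lemma psd_rank1_decomp P : psd P ->
  exists s : seq (R * 'cV[R]_N),
    (forall z, z \in s -> 0 <= z.1) /\ P = \sum_(z <- s) z.1 *: (z.2 *m z.2^T).
Proof.
move: {2}#|_| (leqnn #|[pred j | P j j != 0]|) => k.
elim: k P => [|k IHk] P supp_le Ppsd.
  exists [::]; rewrite big_nil; split=> //; apply: psd_eq0 => // j.
  move: supp_le; rewrite leqn0 => /eqP/card0_eq/(_ j).
  by rewrite !inE => /negbFE/eqP.
have [j /= Pjj | supp0] := pickP [pred j | P j j != 0]; last first.
  exists [::]; rewrite big_nil; split=> //; apply: psd_eq0 => // j.
  by apply/eqP; move/negbFE: (supp0 j).
have Pjj_gt0 : 0 < P j j by rewrite lt_def Pjj -mxform_delta; exact: Ppsd.2.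
set P' := P - (P j j)^-1 *: (col j P *m (col j P)^T).
have [|s [s_ge0 EP']] := IHk P' _ (psd_schur Ppsd Pjj_gt0).
  have : [pred l | P' l l != 0] \subset [predD1 [pred l | P l l != 0] & j].
    apply/subsetP => l; rewrite !inE psd_schur_diag; apply: contraR.
    case/nandP => [/negPn/eqP -> | /negPn/eqP Pll].
      by rewrite expr2 mulrA mulVf ?mul1r ?subrr.
    by rewrite Pll (psd_row_eq0 j Ppsd Pll) expr0n mulr0 subrr.
  move/subset_leq_card/leq_trans; apply.
  by move: supp_le; rewrite (cardD1 j [pred l | P l l != 0]) inE Pjj.
exists (((P j j)^-1, col j P) :: s); split.
  by move=> z; rewrite inE => /predU1P [-> /= | /s_ge0 //]; rewrite invr_ge0 ltW.
by rewrite big_cons -EP' /P' /= addrC subrK.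
Qed.

Lemma pd_psd P : pd P -> psd P.
Proof.
move=> [sP Ppos]; split=> // v; have [-> | /Ppos/ltW //] := eqVneq v 0.
by rewrite -/(mxform _ _ _) mxform0l.
Qed.

Lemma inj_unitmx M : (forall v, M *m v = 0 -> v = 0) -> M \in unitmx.
Proof.
move=> M_inj; rewrite -unitmx_tr -row_free_unit; apply: inj_row_free => v vM0.
apply: trmx_inj; rewrite trmx0; apply: M_inj.
by rewrite -[M]trmxK -trmx_mul vM0 trmx0.
Qed.

Lemma pd_unitmx P : pd P -> P \in unitmx.
Proof.
move=> [_ Ppos]; apply: inj_unitmx => v Pv0; apply/eqP; apply: contraT => /Ppos.
by rewrite -mulmxA Pv0 mulmx0 mxE ltxx.
Qed.

Lemma pd_invmx P : pd P -> pd (invmx P).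
Proof.
move=> Ppd; have Pu := pd_unitmx Ppd; have [sP Ppos] := Ppd.
split=> [|v v0]; first by rewrite trmx_inv sP.
have : invmx P *m v != 0.
  by apply: contra v0 => /eqP/(congr1 (mulmx P)); rewrite mulKVmx // mulmx0 => ->.
move/Ppos; congr (0 < _ 0 0).
by rewrite trmx_mul trmx_inv sP !mulmxA mulmxKV.
Qed.

Lemma psd_congruence P B : P^T = P -> P \in unitmx -> psd B <-> psd (P *m B *m P).
Proof.
move=> sP Pu; split=> [[sB Bpsd] | [sPBP PBPpsd]].
  split=> [|v]; first by rewrite !trmx_mul sP sB mulmxA.
  by have := Bpsd (P *m v); rewrite trmx_mul sP !mulmxA.
split=> [|v].
  apply: (can_inj (mulKmx Pu)); apply: (can_inj (mulmxK Pu)).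
  by rewrite -[in RHS]sPBP !trmx_mul sP !mulmxA.
have := PBPpsd (invmx P *m v).
by rewrite trmx_mul trmx_inv sP !mulmxA mulmxKV // -(mulmxA _ P) mulmxV // mulmx1.
Qed.

Lemma mxtrace_sqr_pd_eq0 P B : pd P -> B^T = B -> \tr (B *m P *m B *m P) = 0 -> B = 0.
Proof.
move=> Ppd sB; have [s [s_ge0 EP]] := psd_rank1_decomp (pd_psd Ppd).
have term z : \tr (B *m P *m B *m (z.1 *: (z.2 *m z.2^T))) =
              z.1 * mxform P (B *m z.2) (B *m z.2).
  rewrite -scalemxAr mxtraceZ mulmxA mxtrace_mulC /mxform trmx_mul sB.
  by rewrite /mxtrace big_ord1 !mulmxA.
rewrite {2}EP mulmx_sumr raddf_sum /=.
under eq_bigr do rewrite term.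
move/eqP; rewrite big_seq psumr_eq0 => [/allP term0|z /s_ge0]; last first.
  by move=> ?; rewrite mulr_ge0 // (pd_psd Ppd).2.
have BP0 : B *m P = 0.
  rewrite EP mulmx_sumr big_seq big1 // => z zs.
  move: (implyP (term0 z zs) zs); rewrite mulf_eq0 => /orP [/eqP -> | Bz0].
    by rewrite scale0r mulmx0.
  suff Bz : B *m z.2 = 0 by rewrite -scalemxAr mulmxA Bz mul0mx scaler0.
  by apply/eqP; apply: contraTT Bz0 => /Ppd.2 /gt_eqF ->.
by rewrite -(mulmxK (pd_unitmx Ppd) B) BP0 mul0mx.
Qed.

End PositiveSemidefinite.

Lemma psd_mxdiag (R : realFieldType) m (L : 'I_m -> nat) (B : forall i, 'M[R]_(L i)) :
  psd (mxdiag B) <-> forall i, psd (B i).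
Proof.
split=> [[sB Bpsd] i | Bpsd]; last first.
  split; first by rewrite tr_mxdiag; apply: eq_mxdiag => i; rewrite (Bpsd i).1.
  move=> v; rewrite -/(mxform _ _ _) mxform_mxdiag sumr_ge0 // => i _.
  exact: (Bpsd i).2.
split; first by move: sB; rewrite tr_mxdiag => /eq_mxdiagP.
move=> c; have := Bpsd (mxcol (fun j => if j == i then conform_mx 0 c else 0)).
rewrite -/(mxform _ _ _) mxform_mxdiag (bigD1 i) //= big1 => [|j ji]; rewrite mxcolK.
  by rewrite eqxx conform_mx_id addr0.
by rewrite (negbTE ji) mxform0l.
Qed.

Section EuclideanGeometry.
Variables (R : realFieldType) (N : nat).
Implicit Types (x y z : 'cV[R]_N) (K : 'cV[R]_N -> Prop).

Lemma dotvC x y : dotv x y = dotv y x.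
Proof. by apply: eq_bigr => u _; rewrite mulrC. Qed.

Lemma dotvDr x y z : dotv x (y + z) = dotv x y + dotv x z.
Proof. by rewrite /dotv -big_split; apply: eq_bigr => u _; rewrite mxE mulrDr. Qed.

Lemma dotvZr x y a : dotv x (a *: y) = a * dotv x y.
Proof. by rewrite /dotv mulr_sumr; apply: eq_bigr => u _; rewrite mxE mulrCA. Qed.

Lemma dotvDl x y z : dotv (y + z) x = dotv y x + dotv z x.
Proof. by rewrite dotvC dotvDr !(dotvC x). Qed.

Lemma dotvZl x y a : dotv (a *: y) x = a * dotv y x.
Proof. by rewrite dotvC dotvZr dotvC. Qed.

Lemma dotv0r x : dotv x 0 = 0.
Proof. by rewrite -(scale0r 0) dotvZr mul0r. Qed.

Lemma dotv_sumr x (I : Type) (r : seq I) (P : pred I) (F : I -> 'cV[R]_N) :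
  dotv x (\sum_(i <- r | P i) F i) = \sum_(i <- r | P i) dotv x (F i).
Proof. exact: (big_morph _ (dotvDr x) (dotv0r x)). Qed.

Lemma sqnorm_ge0 x : 0 <= sqnorm x.
Proof. by rewrite sumr_ge0 // => u _; rewrite -expr2 sqr_ge0. Qed.

Lemma sqnorm_eq0 x : (sqnorm x == 0) = (x == 0).
Proof.
apply/idP/eqP => [|->]; last by rewrite /sqnorm dotv0r.
rewrite psumr_eq0 => [/allP x0|u _]; last by rewrite -expr2 sqr_ge0.
apply/matrixP => u j; rewrite ord1 mxE.
by move/implyP/(_ isT): (x0 u (mem_index_enum _)); rewrite mulf_eq0 orbb => /eqP.
Qed.

Lemma sqnormZ x a : sqnorm (a *: x) = a ^+ 2 * sqnorm x.
Proof. by rewrite /sqnorm dotvZl dotvZr mulrA expr2. Qed.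

Lemma interior_sub K x : interior_of K x -> K x.
Proof. by case=> e e_gt0 Kball; apply: Kball; rewrite subrr /sqnorm dotv0r exprn_gt0. Qed.

Lemma interior_shift K x y : interior_of K x ->
  exists2 t, 0 < t & K (x + t *: y).
Proof.
case=> e e_gt0 Kball; exists (e / (sqnorm y + 1)).
  by rewrite divr_gt0 // ltr_wpDl // sqnorm_ge0.
apply: Kball; rewrite addrAC subrr add0r sqnormZ expr_div_n.
have y1_gt0 : 0 < sqnorm y + 1 by rewrite ltr_wpDl // sqnorm_ge0.
rewrite mulrAC ltr_pdivrMr ?exprn_gt0 // ltr_pM2l ?exprn_gt0 //.
by have := sqnorm_ge0 y; nra.
Qed.

Lemma full_dim_orthogonal_eq0 K y : full_dim K ->
  (forall s, K s -> dotv y s = 0) -> y = 0.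
Proof.
case=> x Kx y_orth; have [t t_gt0 Kxty] := interior_shift y Kx.
have := y_orth _ Kxty; rewrite dotvDr (y_orth x (interior_sub Kx)) add0r dotvZr.
by move/eqP; rewrite mulf_eq0 gt_eqF //= -/(sqnorm y) sqnorm_eq0 => /eqP.
Qed.

Lemma interior_dual_cone_gt0 K x s : interior_of (dual_cone K) x ->
  K s -> s != 0 -> 0 < dotv x s.
Proof.
move=> xint Ks s0; have [t t_gt0 Kxts] := interior_shift (- s) xint.
have := Kxts s Ks; rewrite dotvDl dotvZl -scaleN1r dotvZl mulN1r mulrN subr_ge0.
apply: lt_le_trans; rewrite mulr_gt0 // lt_def -/(sqnorm s) sqnorm_eq0 s0.
exact: sqnorm_ge0.
Qed.

End EuclideanGeometry.

Section LinearCombinations.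
Variables (R : realFieldType) (n N : nat) (q : 'I_N -> {mpoly R[n]}).

Lemma lincombD c1 c2 : lincomb q (c1 + c2) = lincomb q c1 + lincomb q c2.
Proof. by rewrite /lincomb -big_split; apply: eq_bigr => u _; rewrite mxE scalerDl. Qed.

Lemma lincombB c1 c2 : lincomb q (c1 - c2) = lincomb q c1 - lincomb q c2.
Proof. by rewrite /lincomb -sumrB; apply: eq_bigr => u _; rewrite !mxE scalerBl. Qed.

Lemma lincomb0 : lincomb q 0 = 0.
Proof. by rewrite /lincomb big1 // => u _; rewrite mxE scale0r. Qed.

Lemma lincomb_sum (I : Type) (r : seq I) (P : pred I) (F : I -> 'cV[R]_N) :
  lincomb q (\sum_(i <- r | P i) F i) = \sum_(i <- r | P i) lincomb q (F i).
Proof. exact: (big_morph _ lincombD lincomb0). Qed.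

End LinearCombinations.

Section LambdaMaps.
Variables (R : realFieldType) (m U : nat) (L : 'I_m -> nat) (A : forall i, 'I_U -> 'M[R]_(L i)).

Lemma Lam_i_evec i u : Lam_i A i (evec R u) = A i u.
Proof.
rewrite /Lam_i (bigD1 u) //= big1 => [|v /negbTE vu]; first by rewrite mxE eqxx scale1r addr0.
by rewrite mxE vu scale0r.
Qed.

Lemma Lam_lin w : Lam A w = \sum_u w u 0 *: Lam A (evec R u).
Proof.
under [RHS]eq_bigr do rewrite /Lam scale_mxdiag.
by rewrite -mxdiag_sum; apply: eq_mxdiag => i; under eq_bigr do rewrite Lam_i_evec.
Qed.

Lemma Lam_adj_lin (I : finType) (c : I -> R) (S : I -> 'M[R]_(\sum_i L i)) :
  Lam_adj A (\sum_k c k *: S k) = \sum_k c k *: Lam_adj A (S k).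
Proof.
apply/matrixP => u j; rewrite mxE summxE /trdot mulmx_sumr raddf_sum.
by apply: eq_bigr => k _; rewrite !mxE -scalemxAr; exact: mxtraceZ.
Qed.

Lemma dotv_Lam_adj w S : dotv w (Lam_adj A S) = trdot (Lam A w) S.
Proof.
rewrite /trdot (Lam_lin w) raddf_sum mulmx_suml raddf_sum /=.
by apply: eq_bigr => u _; rewrite mxE linearZ -scalemxAl mxtraceZ.
Qed.

Lemma Hess_mulmx x w : Hess A x *m w = Hess_op A x w.
Proof.
have -> : Hess_op A x w = \sum_v w v 0 *: Hess_op A x (evec R v).
  rewrite /Hess_op -Lam_adj_lin {1}(Lam_lin w) mulmx_sumr mulmx_suml.
  by congr (Lam_adj A _); apply: eq_bigr => v _; rewrite -scalemxAr -scalemxAl.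
apply/matrixP => u j; rewrite ord1 mxE summxE.
by apply: eq_bigr => v _; rewrite !mxE mulrC.
Qed.

End LambdaMaps.

Section WeightedSumsOfSquares.
Variables (R : realFieldType) (n m : nat) (g : 'I_m -> {mpoly R[n]}) (d : 'I_m -> nat).
Variables (U : nat) (q : 'I_U -> {mpoly R[n]}) (L : 'I_m -> nat).
Variables (p : forall i, 'I_(L i) -> {mpoly R[n]}) (A : forall i, 'I_U -> 'M[R]_(L i)).
Arguments p : clear implicits.

Hypothesis hg : forall i, g i != 0.
Hypothesis hq : is_basis_of (inV g d) q.
Hypothesis hSigma : proper_cone (Sigma g d q).
Hypothesis hp : forall i, is_basis_of (fun r => deg_le r (d i)) (p i).
Hypothesis hA : forall i (j k : 'I_(L i)),
  \sum_(u < U) (A i u) j k *: q u = g i * (p i j * p i k).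

Local Notation Sigma := (Sigma g d q).

Lemma lincomb_inj c1 c2 : lincomb q c1 = lincomb q c2 -> c1 = c2.
Proof.
case: hq => _ q_free _ Ec; apply/eqP; rewrite -subr_eq0; apply/eqP.
by apply: q_free; rewrite lincombB Ec subrr.
Qed.

Lemma A_sym i u : (A i u)^T = A i u.
Proof.
have Ecol j k : lincomb q (\col_v A i v j k) = g i * (p i j * p i k).
  by rewrite -hA; apply: eq_bigr => v _; rewrite mxE.
apply/matrixP => j k; rewrite mxE.
have /lincomb_inj/(congr1 (fun c : 'cV[R]_U => c u 0)) :
    lincomb q (\col_v A i v k j) = lincomb q (\col_v A i v j k).
  by rewrite !Ecol (mulrC (p i k)).
by rewrite !mxE.
Qed.

Lemma Lam_sym w : (Lam A w)^T = Lam A w.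
Proof.
rewrite tr_mxdiag; apply: eq_mxdiag => i.
by rewrite raddf_sum /=; apply: eq_bigr => u _; rewrite linearZ /= A_sym.
Qed.

(* [wsq i c] is Lambda_i^*(c c^T), the coordinate vector of the weighted square g_i (c . p_i)^2. *)
Definition wsq i (c : 'cV[R]_(L i)) : 'cV[R]_U := \col_u mxform (A i u) c c.
Arguments wsq : clear implicits.

Lemma lincomb_wsq i c : lincomb q (wsq i c) = g i * lincomb (p i) c ^+ 2.
Proof.
rewrite /lincomb; under eq_bigr do rewrite mxE mxform_sum_entries scaler_suml.
under eq_bigr do under eq_bigr do rewrite scaler_suml.
rewrite exchange_big /=; under eq_bigr do rewrite exchange_big /=.
rewrite expr2 big_distrl /= mulr_sumr; apply: eq_bigr => a _.
rewrite big_distrr /= mulr_sumr; apply: eq_bigr => b _.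
under eq_bigr do rewrite mulrAC -scalerA.
by rewrite -scaler_sumr hA -scalerAl -!scalerAr scalerA.
Qed.

Lemma dotv_wsq w i c : dotv w (wsq i c) = mxform (Lam_i A i w) c c.
Proof. by rewrite mxform_sum; apply: eq_bigr => u _; rewrite mxE mxformZ. Qed.

Lemma mxform_Lam w v :
  mxform (Lam A w) v v = dotv w (\sum_i wsq i (submxcol v i)).
Proof. by rewrite mxform_mxdiag dotv_sumr; apply: eq_bigr => i _; rewrite dotv_wsq. Qed.

Lemma deg_lincomb i c : deg_le (lincomb (p i) c) (d i).
Proof.
rewrite /deg_le /lincomb; apply: leq_trans (msize_sum _ _ _) _; apply/bigmax_leqP => j _.
by apply: leq_trans (msizeZ_le _ _) _; case: (hp i) => p_deg _ _; apply: p_deg.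
Qed.

Lemma Sigma_sum_wsq (P : pred 'I_m) (c : forall i, 'cV[R]_(L i)) :
  Sigma (\sum_(i | P i) wsq i (c i)).
Proof.
exists (fun i => if P i then lincomb (p i) (c i) ^+ 2 else 0); split.
  move=> i; case: (P i); last by exists [::]; rewrite big_nil.
  exists [:: lincomb (p i) (c i)]; split; last by rewrite big_seq1.
  by move=> r; rewrite inE => /eqP ->; apply: deg_lincomb.
rewrite lincomb_sum big_mkcond; apply: eq_bigr => i _.
by case: (P i); rewrite ?lincomb_wsq ?lincomb0 ?mulr0.
Qed.

Lemma Sigma_dotv_ge0 w s : Sigma s ->
  (forall i c, 0 <= mxform (Lam_i A i w) c c) -> 0 <= dotv w s.
Proof.
case=> [sigma [sigma_sos Es]] w_pos.
have sos_coord i : exists t : 'cV[R]_U, lincomb q t = g i * sigma i /\ 0 <= dotv w t.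
  have [_ _ p_span] := hp i.
  have [r [r_deg ->]] := sigma_sos i; elim: r r_deg => [|r rs IHr] r_deg.
    by exists 0; rewrite big_nil mulr0 lincomb0 dotv0r.
  have [c ->] := p_span r (r_deg r (mem_head _ _)).
  have [|t [Et t_pos]] := IHr.
    by move=> r' r'_in; apply: r_deg; rewrite inE r'_in orbT.
  exists (wsq i c + t); rewrite lincombD lincomb_wsq Et big_cons mulrDr.
  by rewrite dotvDr addr_ge0 // dotv_wsq.
have [t Et] := fin_all_exists sos_coord.
have -> : s = \sum_i t i.
  by apply: lincomb_inj; rewrite Es lincomb_sum; apply: eq_bigr => i _; rewrite (Et i).1.
by rewrite dotv_sumr sumr_ge0 // => i _; apply: (Et i).2.
Qed.

Lemma dual_cone_Sigma_psd w : dual_cone Sigma w <-> psd (Lam A w).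
Proof.
split=> [w_dual | /psd_mxdiag Lw_psd s Ss].
  split=> [|v]; first exact: Lam_sym.
  by rewrite -/(mxform _ _ _) mxform_Lam; apply: w_dual; apply: Sigma_sum_wsq.
by apply: Sigma_dotv_ge0 => // i c; apply: (Lw_psd i).2.
Qed.

Lemma Lam_inj w : Lam A w = 0 -> w = 0.
Proof.
move=> Lw0; have Lwi0 i : Lam_i A i w = 0 by move: i; apply/eq_mxdiagP; rewrite mxdiag0.
have [_ _ _ _ Sigma_full] := hSigma.
apply: (full_dim_orthogonal_eq0 Sigma_full) => s Ss.
have dotv_ge0 a : 0 <= dotv (a *: w) s.
  apply: Sigma_dotv_ge0 => // i c.
  by rewrite -dotv_wsq dotvZl dotv_wsq Lwi0 mxform0 mulr0.
apply/eqP; rewrite eq_le -oppr_ge0 -mulN1r -dotvZl dotv_ge0.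
by have := dotv_ge0 1; rewrite scale1r => ->.
Qed.

Lemma sum_wsq_eq0 (c : forall i, 'cV[R]_(L i)) :
  \sum_i wsq i (c i) = 0 -> forall i, c i = 0.
Proof.
move=> sum0 i; have [_ _ _ Sigma_pointed _] := hSigma.
have wsq_i0 : wsq i (c i) = 0.
  apply: Sigma_pointed; first by have := Sigma_sum_wsq (pred1 i) c; rewrite big_pred1_eq.
  move: sum0; rewrite (bigD1 i) //= => /eqP; rewrite addr_eq0 => /eqP ->.
  by rewrite opprK; apply: Sigma_sum_wsq.
have /eqP : g i * lincomb (p i) (c i) ^+ 2 = 0 by rewrite -lincomb_wsq wsq_i0 lincomb0.
rewrite mulf_eq0 (negbTE (hg i)) expf_eq0 /= => /eqP.
by case: (hp i) => _ p_free _; apply: p_free.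
Qed.

Lemma Lam_pd x : interior_of (dual_cone Sigma) x -> pd (Lam A x).
Proof.
move=> x_int; split=> [|v v0]; first exact: Lam_sym.
rewrite -/(mxform _ _ _) mxform_Lam; apply: interior_dual_cone_gt0 x_int _ _.
  exact: Sigma_sum_wsq.
apply: contra v0 => /eqP/sum_wsq_eq0 v_blocks0.
by rewrite -(submxcolK v) (eq_mxcol v_blocks0) mxcol0.
Qed.

Lemma Hess_unitmx x : interior_of (dual_cone Sigma) x -> Hess A x \in unitmx.
Proof.
move=> x_int; apply: inj_unitmx => w; rewrite Hess_mulmx => Hw0.
apply: Lam_inj; apply: (mxtrace_sqr_pd_eq0 (pd_invmx (Lam_pd x_int)) (Lam_sym w)).
have := dotv_Lam_adj A w (invmx (Lam A x) *m Lam A w *m invmx (Lam A x)).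
by rewrite -/(Hess_op A x w) Hw0 dotv0r /trdot Lam_sym !mulmxA.
Qed.

End WeightedSumsOfSquares.

Theorem theorem1 (R : realFieldType) (n m : nat)
  (g : 'I_m -> {mpoly R[n]}) (hg : forall i, g i != 0) (d : 'I_m -> nat)
  (U : nat) (q : 'I_U -> {mpoly R[n]}) (hq : is_basis_of (inV g d) q)
  (hSigma : proper_cone (Sigma g d q))
  (L : 'I_m -> nat) (p : forall i, 'I_(L i) -> {mpoly R[n]})
  (hp : forall i, is_basis_of (fun r => deg_le r (d i)) (p i))
  (A : forall i, 'I_U -> 'M[R]_(L i))
  (hA : forall i (j k : 'I_(L i)),
          \sum_(u < U) (A i u) j k *: q u = g i * (p i j * p i k))
  (x : 'cV[R]_U) (hx : interior_of (dual_cone (Sigma g d q)) x)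
  (s : 'cV[R]_U) :
  Lam_adj A (Smat A x s) = s /\
  (Sigma g d q s -> (dual_certificate g d q A x s <-> psd (Smat A x s))).
Proof.
have Lx_pd := Lam_pd hg hq hSigma hp hA hx.
have Hx_unit := Hess_unitmx hg hq hSigma hp hA hx.
split.
  by rewrite /Smat -/(Hess_op A x _) -Hess_mulmx /Hinv_app mulKVmx.
move=> _; rewrite /dual_certificate (dual_cone_Sigma_psd hq hp hA) /Smat.
apply: psd_congruence; first by rewrite trmx_inv (Lam_sym hq hA).
by rewrite unitmx_inv pd_unitmx.
Qed.
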